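(* Let $\rho_0=\sqrt{1+e^{W_0(2/e^2)+2}}$ and let $b\mapsto\rho_b$ ($b\ge0$) be the solution of the ordinary differential equation $\frac{d}{db}\rho_b=\frac{\rho_b}{2\rho_b+b}\left(1-\frac{2}{\rho_b^2+1}\right)$ with initial value $\rho_0$ at $b=0$. Then for every $b>0$, $$\max\left(\rho_0,\ \frac45\cdot\frac{b}{2W_0\!\left(\frac{b}{2\rho_0}\right)}\right)\le\rho_b\le\frac{b}{2W_0\!\left(\frac{b}{2\rho_0}\right)}.$$
   Context: $W_0$ is the principal branch of the Lambert W function: for $z>-1/e$, $W_0(z)$ is the unique $w>-1$ with $we^w=z$. *)

From Stdlib Require Import Reals Lra ClassicalEpsilon.
From Coquelicot Require Import Coquelicot.
Open Scope R_scope.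

(* Defined via Hilbert's epsilon; outside
   the domain z > -1/e its value is unspecified (never used there). *)
Definition W0 (z : R) : R :=
  epsilon (inhabits 0) (fun w => -1 < w /\ w * exp w = z).

Definition rho0 : R := sqrt (1 + exp (W0 (2 / (exp 1) ^ 2) + 2)).

Definition ode_rhs (b r : R) : R := r / (2 * r + b) * (1 - 2 / (r ^ 2 + 1)).

From Stdlib Require Import Reals Lra ClassicalEpsilon.
From Coquelicot Require Import Coquelicot.
Open Scope R_scope.

(* Put [w = W0 (b / (2 rho0))] and [U = b / (2 w)]; then [U = rho0 e^w] is the root
   [r >= rho0] of [2 r ln (r / rho0) = b].  Both bounds thus come from barrier functions
   [k r ln (r / rho0) + gam r - b], evaluated along [r = rho_b].  Such a function keeps
   its sign on [b > 0] if it has that sign just after [b = 0] and, at each of its zeros,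
   its derivative along the ODE has that same sign (first-crossing argument).  For
   [(k, gam) = (2, 0)] it stays negative, whence [rho_b <= U]; for [k = 5/2] and a small
   [gam > 0] it stays positive (the slope at a zero needs [rho0 > 3]), which together with
   [ln (4/5) <= -1/5] gives [rho_b >= 4/5 U].  The same argument for [rho0 - rho_b] first
   shows [rho_b > rho0]. *)

Lemma at_right_0_iff (P : R -> Prop) :
  at_right 0 P <-> exists d, 0 < d /\ forall t, 0 < t < d -> P t.
Proof.
  split.
  - intros [d Hd]. exists d; split; [apply cond_pos|].
    intros t Ht. apply Hd; [|lra].
    apply Rabs_lt_between'. simpl. lra.
  - intros [d [Hd HP]]. exists (mkposreal d Hd). intros t Ht Hpos. apply HP.
    apply Rabs_lt_between' in Ht. simpl in Ht. lra.
Qed.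

Lemma at_right_0_pos : at_right 0 (fun t => 0 < t).
Proof. apply at_right_0_iff. exists 1. split; [lra | intros t Ht; apply Ht]. Qed.

Lemma filter_lt_of_lim {T} (F : (T -> Prop) -> Prop) (f : T -> R) y M :
  filterlim f F (locally y) -> y < M -> F (fun t => f t < M).
Proof. intros Hf HyM. exact (Hf _ (open_lt M y HyM)). Qed.

Lemma filter_gt_of_lim {T} (F : (T -> Prop) -> Prop) (f : T -> R) y M :
  filterlim f F (locally y) -> M < y -> F (fun t => M < f t).
Proof. intros Hf HyM. exact (Hf _ (open_gt M y HyM)). Qed.

Lemma filterlim_sub_id_at_right_0 (f : R -> R) y :
  filterlim f (at_right 0) (locally y) ->
  filterlim (fun t => f t - t) (at_right 0) (locally y).
Proof.
  intros Hf. apply filterlim_locally. intros eps.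
  pose proof (proj1 (filterlim_locally _ _) Hf (pos_div_2 eps)) as Hnear.
  assert (Hsmall : at_right 0 (fun t => 0 < t < eps / 2))
    by (apply at_right_0_iff; exists (eps / 2); split; [apply is_pos_div_2 | auto]).
  eapply filter_imp; [|exact (filter_and _ _ Hnear Hsmall)]. intros t [Hft Ht].
  apply Rabs_lt_between' in Hft. simpl in Hft. apply Rabs_lt_between'. lra.
Qed.

Lemma is_derive_near (g : R -> R) x l : is_derive g x l ->
  forall eps, 0 < eps -> exists d, 0 < d /\ forall y, Rabs (y - x) < d -> Rabs (g y - g x) < eps.
Proof.
  intros Hg eps Heps.
  assert (Hc : continuity_pt g x)
    by (apply derivable_continuous_pt; exists l; apply is_derive_Reals, Hg).
  destruct (Hc eps Heps) as [d [Hd Hy]]. exists d; split; [exact Hd|].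
  intros y Hyx. destruct (Req_dec y x) as [->|Hne].
  - rewrite Rminus_eq_0, Rabs_R0; exact Heps.
  - apply Hy. repeat split; auto.
Qed.

Lemma is_derive_neg_left (g : R -> R) x l : is_derive g x l -> l < 0 ->
  exists d, 0 < d /\ forall y, x - d < y < x -> g x < g y.
Proof.
  intros Hg Hl. apply is_derive_Reals in Hg.
  destruct (Hg (- l / 2)) as [d Hd]; [lra|].
  exists d. split; [apply cond_pos|]. intros y Hy.
  assert (Hq : (g (x + (y - x)) - g x) / (y - x) < l / 2).
  { assert (Hyx : Rabs (y - x) < d) by (rewrite Rabs_left; lra).
    destruct (Rabs_def2 _ _ (Hd (y - x) ltac:(lra) Hyx)). lra. }
  replace (x + (y - x)) with y in Hq by ring.
  assert (Hgy : g y - g x = (g y - g x) / (y - x) * (y - x)) by (field; lra).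
  nra.
Qed.

Lemma is_derive_comp_sub_id (phi f : R -> R) t dphi df :
  is_derive phi (f t) dphi -> is_derive f t df ->
  is_derive (fun s => phi (f s) - s) t (dphi * df - 1).
Proof.
  intros Hphi Hf.
  replace (dphi * df - 1) with (minus (scal df dphi) 1)
    by (unfold minus, plus, opp, scal; simpl; unfold mult; simpl; ring).
  apply (is_derive_minus (fun s => phi (f s)) (fun s => s));
    [exact (is_derive_comp phi f t dphi df Hphi Hf) | exact (is_derive_id (K := R_AbsRing) t)].
Qed.

Lemma at_right_neg_of_lim_0 (g dg : R -> R) :
  filterlim g (at_right 0) (locally 0) ->
  (forall t, 0 < t -> is_derive g t (dg t)) ->
  at_right 0 (fun t => dg t < 0) ->
  at_right 0 (fun t => g t < 0).
Proof.
  intros Hlim Hg Hdg.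
  apply at_right_0_iff in Hdg as [d [Hd Hdg]].
  apply at_right_0_iff. exists d. split; [exact Hd|]. intros t Ht.
  assert (Hdecr : forall s u, 0 < s -> s < u -> u < d -> g u < g s).
  { intros s u Hs Hsu Hu. apply Ropp_lt_cancel.
    apply (incr_function (fun x => - g x) 0 d (fun x => - dg x)); simpl; try lra.
    - intros x Hx0 Hxd. apply @is_derive_opp, Hg, Hx0.
    - intros x Hx0 Hxd. specialize (Hdg x (conj Hx0 Hxd)). lra. }
  assert (Hhalf : g (t / 2) <= 0).
  { apply Rnot_lt_le. intros Hpos.
    assert (Hsmall : at_right 0 (fun s => 0 < s < t / 2))
      by (apply at_right_0_iff; exists (t / 2); split; [lra|auto]).
    destruct (filter_ex _ (filter_and _ _ (filter_lt_of_lim _ _ _ _ Hlim Hpos) Hsmall))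
      as [s [Hgs Hs]].
    specialize (Hdecr s (t / 2) ltac:(lra) ltac:(lra) ltac:(lra)). lra. }
  specialize (Hdecr (t / 2) t ltac:(lra) ltac:(lra) ltac:(lra)). lra.
Qed.

Lemma neg_of_neg_slope_at_zeros (g dg : R -> R) :
  at_right 0 (fun t => g t < 0) ->
  (forall t, 0 < t -> is_derive g t (dg t)) ->
  (forall t, 0 < t -> g t = 0 -> dg t < 0) ->
  forall t, 0 < t -> g t < 0.
Proof.
  intros Hstart Hg Hzero B HB.
  apply at_right_0_iff in Hstart as [d [Hd Hstart]].
  destruct (Rlt_or_le B d) as [HBd|HdB]; [apply Hstart; lra|].
  set (a := d / 2).
  assert (Hga : g a < 0) by (apply Hstart; unfold a; lra).
  set (E := fun x => a <= x <= B /\ forall u, a <= u <= x -> g u < 0).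
  assert (HaE : E a).
  { split; [unfold a; lra|]. intros u Hu. replace u with a by lra. exact Hga. }
  destruct (completeness E) as [s [Hub Hlub]].
  { exists B. intros x [Hx _]. lra. }
  { exists a. exact HaE. }
  assert (Has : a <= s) by (apply Hub, HaE).
  assert (HsB : s <= B) by (apply Hlub; intros x [Hx _]; lra).
  assert (Hs0 : 0 < s) by (unfold a in Has; lra).
  assert (Hbelow : forall u, a <= u < s -> g u < 0).
  { intros u Hu. apply Rnot_le_lt. intros Hnonneg.
    enough (s <= u) by lra. apply Hlub. intros x [Hx Hx'].
    apply Rnot_lt_le. intros Hux. specialize (Hx' u ltac:(lra)). lra. }
  assert (Hgs : g s < 0).
  { apply Rnot_le_lt. intros Hnonneg.
    assert (Has' : a < s) by (destruct (Req_dec a s) as [<-|]; lra).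
    (* a nonnegative value at s forces positive values just left of s *)
    assert (Hleft : exists e, 0 < e /\ forall y, s - e < y < s -> 0 < g y).
    { destruct (Rle_lt_or_eq_dec 0 (g s) Hnonneg) as [Hpos|Hgs0].
      - destruct (is_derive_near _ _ _ (Hg s Hs0) (g s) Hpos) as [e [He Hnear]].
        exists e. split; [exact He|]. intros y Hy.
        assert (Hye : Rabs (y - s) < e) by (rewrite Rabs_left; lra).
        destruct (Rabs_def2 _ _ (Hnear y Hye)). lra.
      - destruct (is_derive_neg_left g s (dg s) (Hg s Hs0) (Hzero s Hs0 (eq_sym Hgs0)))
          as [e [He Hnear]].
        exists e. split; [exact He|]. intros y Hy. specialize (Hnear y Hy). lra. }
    destruct Hleft as [e [He Hleft]].
    set (y := s - Rmin e (s - a) / 2).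
    assert (Hy : s - e < y < s /\ a <= y).
    { pose proof (Rmin_l e (s - a)). pose proof (Rmin_r e (s - a)).
      pose proof (Rmin_pos e (s - a) He ltac:(lra)). unfold y. lra. }
    specialize (Hleft y ltac:(lra)). specialize (Hbelow y ltac:(lra)). lra. }
  destruct (Rle_lt_or_eq_dec s B HsB) as [HsB'|<-]; [exfalso|exact Hgs].
  (* g stays negative a little beyond s < B, contradicting s = sup E *)
  destruct (is_derive_near _ _ _ (Hg s Hs0) (- g s) ltac:(lra)) as [e [He Hnear]].
  set (x := Rmin B (s + e / 2)).
  assert (Hx : s < x <= B /\ x < s + e).
  { pose proof (Rmin_l B (s + e / 2)). pose proof (Rmin_r B (s + e / 2)).
    pose proof (Rmin_glb_lt B (s + e / 2) s HsB' ltac:(lra)). unfold x. lra. }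
  assert (HxE : E x).
  { split; [lra|]. intros u Hu. destruct (Rlt_or_le u s); [apply Hbelow; lra|].
    assert (Hue : Rabs (u - s) < e) by (rewrite Rabs_pos_eq; lra).
    destruct (Rabs_def2 _ _ (Hnear u Hue)). lra. }
  specialize (Hub x HxE). lra.
Qed.

Lemma ln_le_sub_1 x : 0 < x -> ln x <= x - 1.
Proof.
  intros Hx. pose proof (exp_ineq1_le (ln x)) as H. rewrite exp_ln in H by exact Hx. lra.
Qed.

Lemma ln_sub_le_div_sub_1 r c : 0 < r -> 0 < c -> ln r - ln c <= r / c - 1.
Proof.
  intros Hr Hc. rewrite <- ln_div by assumption. apply ln_le_sub_1, Rdiv_lt_0_compat; assumption.
Qed.

Lemma exp_9_4_gt_8 : 8 < exp (9 / 4).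
Proof.
  eapply Rlt_le_trans; [|apply (exp_ge_taylor (9 / 4) 4); lra].
  simpl. lra.
Qed.

Lemma W0_pos_spec z : 0 < z -> 0 < W0 z /\ W0 z * exp (W0 z) = z.
Proof.
  intros Hz.
  assert (Hex : exists w, -1 < w /\ w * exp w = z).
  { assert (Hcont : continuity (fun w => w * exp w - z)).
    { intros x. apply derivable_continuous_pt, ex_derive_Reals_0. auto_derive. easy. }
    assert (Hz1 : 1 + z < exp z) by (apply exp_ineq1; lra).
    destruct (IVT _ 0 z Hcont Hz) as [w [Hw Hwz]].
    - rewrite exp_0. lra.
    - nra.
    - exists w. split; lra. }
  destruct (epsilon_spec (inhabits 0) _ Hex) as [Hgt Hw].
  fold (W0 z) in Hgt, Hw.
  split; [|exact Hw].
  pose proof (exp_pos (W0 z)). nra.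
Qed.

Lemma lambert_scale c b w : 0 < c -> 0 < w -> w * exp w = b / (2 * c) ->
  b / (2 * w) = c * exp w.
Proof.
  intros Hc Hw Hwe.
  assert (Hb : b = 2 * c * (w * exp w)) by (rewrite Hwe; field; lra).
  rewrite Hb. field. lra.
Qed.

Lemma rho0_gt_3 : 3 < rho0.
Proof.
  set (w := W0 (2 / exp 1 ^ 2)).
  assert (He : 0 < exp 1) by apply exp_pos.
  destruct (W0_pos_spec (2 / exp 1 ^ 2)) as [Hw Hwe]; [apply Rdiv_lt_0_compat; nra|].
  fold w in Hw, Hwe.
  assert (Hexp2 : exp 2 = exp 1 ^ 2)
    by (replace (exp 2) with (exp (1 + 1)) by (f_equal; ring); rewrite exp_plus; ring).
  assert (Hwe2 : w * exp (w + 2) = 2).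
  { rewrite exp_plus, Hexp2, <- Rmult_assoc, Hwe. field. lra. }
  (* rho0 ^ 2 = 1 + 2 / w, and w < 1/4 because w e^(w+2) = 2 < 1/4 e^(9/4) *)
  assert (Hw4 : w < 1 / 4).
  { apply Rnot_le_lt. intros Hw4.
    assert (Hmon : exp (9 / 4) <= exp (w + 2))
      by (destruct (Rle_lt_or_eq_dec _ _ Hw4) as [Hlt|<-];
          [apply Rlt_le, exp_increasing; lra | right; f_equal; field]).
    pose proof exp_9_4_gt_8. nra. }
  assert (Hexpw : exp (w + 2) = 2 / w)
    by (apply (Rmult_eq_reg_r w); [rewrite Rmult_comm, Hwe2; field|]; lra).
  unfold rho0. fold w. rewrite Hexpw, <- (sqrt_pow2 3) by lra.
  apply sqrt_lt_1_alt. split; [lra|].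
  assert (Hinv : 2 / w * w = 2) by (field; lra).
  replace (3 ^ 2) with 9 by ring. nra.
Qed.

Lemma ode_rhs_pos t r : 0 <= t -> 1 < r -> 0 < ode_rhs t r.
Proof.
  intros Ht Hr. unfold ode_rhs.
  replace (1 - 2 / (r ^ 2 + 1)) with ((r ^ 2 - 1) / (r ^ 2 + 1)) by (field; nra).
  apply Rmult_lt_0_compat; apply Rdiv_lt_0_compat; nra.
Qed.

Definition barrier (c k gam r : R) : R := k * (r * (ln r - ln c)) + gam * r.

Definition barrier_slope (c k gam t r : R) : R :=
  (k * (ln r - ln c + 1) + gam) * ode_rhs t r - 1.

Lemma is_derive_barrier c k gam r : 0 < c -> 0 < r ->
  is_derive (barrier c k gam) r (k * (ln r - ln c + 1) + gam).
Proof. intros Hc Hr. unfold barrier. auto_derive; [lra | field; lra]. Qed.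

Lemma barrier_slope_upper_at_zero c t r : 0 < c -> c < r -> barrier c 2 0 r = t ->
  barrier_slope c 2 0 t r = - (2 / (r ^ 2 + 1)).
Proof.
  intros Hc Hcr <-. unfold barrier_slope, barrier, ode_rhs.
  assert (Hl : 0 < ln r - ln c) by (apply Rlt_0_minus, ln_increasing; lra).
  field. split; nra.
Qed.

Lemma barrier_slope_upper_near_init c t r : 1 < c -> 0 < t ->
  c < r < c * (1 + 2 / (4 * c ^ 2 + 1)) -> barrier_slope c 2 0 t r < 0.
Proof.
  intros Hc Ht [Hcr Hrc]. set (kap := 2 / (4 * c ^ 2 + 1)) in Hrc.
  (* ln (r / c) < kap < 2 / (r ^ 2 + 1), so (1 + ln (r / c)) (1 - 2 / (r ^ 2 + 1)) < 1 - kap ^ 2 *)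
  assert (Hkap : 0 < kap < 1).
  { unfold kap. split; [apply Rdiv_lt_0_compat; nra|].
    apply Rlt_div_l; nra. }
  set (l := ln r - ln c).
  assert (Hl0 : 0 <= l) by (pose proof (ln_le c r ltac:(lra) ltac:(lra)); unfold l; lra).
  assert (Hl : l < kap).
  { assert (Hl1 : l <= r / c - 1) by (apply ln_sub_le_div_sub_1; lra).
    assert (r / c < 1 + kap) by (apply Rlt_div_l; lra).
    lra. }
  set (D := 2 / (r ^ 2 + 1)).
  assert (HD : kap < D < 1).
  { assert (Hr2c : r < 2 * c) by nra.
    unfold kap, D. split.
    - unfold Rdiv. apply Rmult_lt_compat_l; [lra|]. apply Rinv_lt_contravar; nra.
    - apply Rlt_div_l; nra. }
  set (A := r / (2 * r + t)).
  assert (HA : 0 < A < 1 / 2).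
  { unfold A. split; [apply Rdiv_lt_0_compat; lra|].
    apply Rlt_div_l; lra. }
  unfold barrier_slope, ode_rhs. fold l A D.
  assert (Hprod : (1 - D) * (l + 1) < 1) by nra.
  nra.
Qed.

Lemma barrier_slope_lower_at_zero c gam t r : 0 < c -> 0 < gam -> 4 * gam < c ^ 2 - 9 ->
  c < r -> barrier c (5 / 2) gam r = t -> 0 < barrier_slope c (5 / 2) gam t r.
Proof.
  intros Hc Hgam Hgamc Hcr <-.
  set (l := ln r - ln c).
  assert (Hl0 : 0 <= l) by (pose proof (ln_le c r ltac:(lra) ltac:(lra)); unfold l; lra).
  assert (Hl1 : l <= r / c - 1) by (apply ln_sub_le_div_sub_1; lra).
  set (P := 5 / 2 * (l + 1) + gam).
  (* 4 P <= 10 r / c + 4 gam, and r^2 - c^2 >= 10 (r / c - 1) because c^2 > 5 *)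
  assert (HP : 4 * P < r ^ 2 + 1).
  { assert (H10 : 10 / c < 2 * c) by (apply Rlt_div_l; nra).
    assert (Hrc : 10 * (r / c - 1) = (r - c) * (10 / c)) by (field; lra).
    unfold P. nra. }
  assert (Hslope : barrier_slope c (5 / 2) gam (barrier c (5 / 2) gam r) r
                   = (1 / 2 - 2 / (r ^ 2 + 1) * P) / (P - 1 / 2)).
  { unfold barrier_slope, barrier, ode_rhs, P. fold l. field. split; nra. }
  rewrite Hslope. apply Rdiv_lt_0_compat; [|unfold P; lra].
  assert (HDP : 2 / (r ^ 2 + 1) * P < 1 / 2).
  { replace (2 / (r ^ 2 + 1) * P) with (2 * P / (r ^ 2 + 1)) by (field; nra).
    apply Rlt_div_l; nra. }
  lra.
Qed.

Section Comparison.

Variables (c : R) (rho : R -> R).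
Hypothesis Hc : 1 < c.
Hypothesis Hrho_0 : filterlim rho (at_right 0) (locally c).
Hypothesis Hode : forall t, 0 < t -> is_derive rho t (ode_rhs t (rho t)).

Lemma rho_gt_init t : 0 < t -> c < rho t.
Proof.
  intros Ht. enough (Hneg : c - rho t < 0) by lra. revert t Ht.
  assert (Hderiv : forall t, 0 < t -> is_derive (fun s => c - rho s) t (- ode_rhs t (rho t))).
  { intros t Ht.
    replace (- ode_rhs t (rho t)) with (scal (ode_rhs t (rho t)) (-1))
      by (unfold scal; simpl; unfold mult; simpl; ring).
    apply (is_derive_comp (fun r => c - r) rho); [auto_derive; [easy | ring] | apply Hode, Ht]. }
  apply (neg_of_neg_slope_at_zeros _ (fun t => - ode_rhs t (rho t))); [|exact Hderiv|].
  - apply (at_right_neg_of_lim_0 _ (fun t => - ode_rhs t (rho t))); [|exact Hderiv|].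
    + assert (Hcont : continuous (fun r => c - r) c)
        by (apply (ex_derive_continuous (V := R_NormedModule)); auto_derive; easy).
      pose proof (filterlim_comp _ _ _ _ _ _ _ _ Hrho_0 Hcont) as Hlim.
      rewrite Rminus_diag in Hlim. exact Hlim.
    + apply (filter_imp (fun t => 0 < t /\ 1 < rho t)).
      { intros t [Ht Hr]. pose proof (ode_rhs_pos t (rho t) ltac:(lra) Hr). lra. }
      apply filter_and; [exact at_right_0_pos | exact (filter_gt_of_lim _ _ _ _ Hrho_0 Hc)].
  - intros t Ht Hzero. replace (rho t) with c by lra.
    pose proof (ode_rhs_pos t c ltac:(lra) Hc). lra.
Qed.

Lemma is_derive_barrier_along k gam t : 0 < t ->
  is_derive (fun s => barrier c k gam (rho s) - s) t (barrier_slope c k gam t (rho t)).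
Proof.
  intros Ht. pose proof (rho_gt_init t Ht).
  apply is_derive_comp_sub_id; [apply is_derive_barrier; lra | apply Hode, Ht].
Qed.

Lemma barrier_along_lim k gam :
  filterlim (fun t => barrier c k gam (rho t) - t) (at_right 0) (locally (gam * c)).
Proof.
  apply filterlim_sub_id_at_right_0.
  assert (Hcont : continuous (barrier c k gam) c)
    by (apply (ex_derive_continuous (V := R_NormedModule)); eexists; apply is_derive_barrier; lra).
  pose proof (filterlim_comp _ _ _ _ _ _ _ _ Hrho_0 Hcont) as Hlim.
  replace (gam * c) with (barrier c k gam c)
    by (unfold barrier; rewrite Rminus_diag; ring).
  exact Hlim.
Qed.

Lemma barrier_upper_lt t : 0 < t -> barrier c 2 0 (rho t) < t.
Proof.
  intros Ht. enough (Hneg : barrier c 2 0 (rho t) - t < 0) by lra. revert t Ht.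
  apply (neg_of_neg_slope_at_zeros _ (fun t => barrier_slope c 2 0 t (rho t)));
    [|apply is_derive_barrier_along|].
  - apply (at_right_neg_of_lim_0 _ (fun t => barrier_slope c 2 0 t (rho t)));
      [|apply is_derive_barrier_along|].
    + pose proof (barrier_along_lim 2 0) as Hlim. rewrite Rmult_0_l in Hlim. exact Hlim.
    + set (kap := 2 / (4 * c ^ 2 + 1)).
      assert (Hkap : 0 < kap) by (apply Rdiv_lt_0_compat; nra).
      apply (filter_imp (fun t => 0 < t /\ rho t < c * (1 + kap))).
      { intros t [Ht Hr]. apply barrier_slope_upper_near_init; auto.
        split; [apply rho_gt_init, Ht | exact Hr]. }
      apply filter_and; [exact at_right_0_pos|].
      apply (filter_lt_of_lim _ _ _ _ Hrho_0). nra.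
  - intros t Ht Hzero. pose proof (rho_gt_init t Ht).
    rewrite (barrier_slope_upper_at_zero c t (rho t)) by lra.
    assert (0 < 2 / (rho t ^ 2 + 1)) by (apply Rdiv_lt_0_compat; nra). lra.
Qed.

Lemma barrier_lower_gt gam t : 0 < gam -> 4 * gam < c ^ 2 - 9 -> 0 < t ->
  t < barrier c (5 / 2) gam (rho t).
Proof.
  intros Hgam Hgamc Ht.
  enough (Hneg : - (barrier c (5 / 2) gam (rho t) - t) < 0) by lra. revert t Ht.
  apply (neg_of_neg_slope_at_zeros _ (fun t => - barrier_slope c (5 / 2) gam t (rho t))).
  - apply (filter_imp (fun t => 0 < barrier c (5 / 2) gam (rho t) - t)); [intros t; lra|].
    apply (filter_gt_of_lim _ _ _ _ (barrier_along_lim _ _)). nra.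
  - intros t Ht. apply @is_derive_opp, is_derive_barrier_along, Ht.
  - intros t Ht Hzero. pose proof (rho_gt_init t Ht).
    enough (0 < barrier_slope c (5 / 2) gam t (rho t)) by lra.
    apply barrier_slope_lower_at_zero; lra.
Qed.

End Comparison.

Lemma le_lambert_of_barrier_upper c b r w : 0 < c -> c <= r -> 0 < w ->
  w * exp w = b / (2 * c) -> barrier c 2 0 r < b -> r <= b / (2 * w).
Proof.
  intros Hc Hcr Hw Hwe Hlt. rewrite (lambert_scale c b w Hc Hw Hwe).
  apply Rnot_lt_le. intros Hr.
  assert (Hl : w < ln r - ln c).
  { pose proof (ln_increasing _ _ (Rmult_lt_0_compat _ _ Hc (exp_pos w)) Hr) as Hln.
    rewrite ln_mult, ln_exp in Hln by (try apply exp_pos; lra). lra. }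
  assert (Hb : b = 2 * c * (w * exp w)) by (rewrite Hwe; field; lra).
  pose proof (exp_pos w). unfold barrier in Hlt. nra.
Qed.

Lemma ge_lambert_of_barrier_lower c gam b r w : 0 < c -> c <= r -> gam < 1 / 2 -> 0 < w ->
  w * exp w = b / (2 * c) -> b < barrier c (5 / 2) gam r -> 4 / 5 * (b / (2 * w)) <= r.
Proof.
  intros Hc Hcr Hgam Hw Hwe Hlt. rewrite (lambert_scale c b w Hc Hw Hwe).
  apply Rnot_lt_le. intros Hr.
  assert (Hl : ln r - ln c < w - 1 / 5).
  { pose proof (exp_pos w).
    pose proof (ln_increasing r _ ltac:(lra) Hr) as Hln.
    rewrite !ln_mult, ln_exp in Hln by nra.
    pose proof (ln_le_sub_1 (4 / 5) ltac:(lra)). lra. }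
  assert (Hb : b = 2 * c * (w * exp w)) by (rewrite Hwe; field; lra).
  pose proof (exp_pos w). unfold barrier in Hlt. nra.
Qed.

Theorem corollaryG1 (rho : R -> R)
  (Hinit : rho 0 = rho0)
  (Hcont0 : filterlim rho (at_right 0) (locally (rho 0)))
  (Hode : forall b : R, 0 < b -> is_derive rho b (ode_rhs b (rho b))) :
  forall b : R, 0 < b ->
    Rmax rho0 (4 / 5 * (b / (2 * W0 (b / (2 * rho0))))) <= rho b
    /\ rho b <= b / (2 * W0 (b / (2 * rho0))).
Proof.
  intros b Hb. rewrite Hinit in Hcont0.
  pose proof rho0_gt_3 as Hc.
  destruct (W0_pos_spec (b / (2 * rho0))) as [Hw Hwe]; [apply Rdiv_lt_0_compat; lra|].
  pose proof (rho_gt_init rho0 rho ltac:(lra) Hcont0 Hode b Hb) as Hgt.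
  assert (Hc2 : 9 < rho0 ^ 2) by nra.
  set (gam := Rmin (1 / 4) ((rho0 ^ 2 - 9) / 8)).
  assert (Hgam : 0 < gam /\ gam < 1 / 2 /\ 4 * gam < rho0 ^ 2 - 9).
  { pose proof (Rmin_l (1 / 4) ((rho0 ^ 2 - 9) / 8)).
    pose proof (Rmin_r (1 / 4) ((rho0 ^ 2 - 9) / 8)).
    pose proof (Rmin_pos (1 / 4) ((rho0 ^ 2 - 9) / 8) ltac:(lra) ltac:(lra)).
    unfold gam. lra. }
  split.
  - apply Rmax_lub; [lra|].
    apply (ge_lambert_of_barrier_lower rho0 gam); [lra | lra | lra | exact Hw | exact Hwe |].
    apply (barrier_lower_gt rho0 rho); [lra | exact Hcont0 | exact Hode | lra | lra | exact Hb].
  - apply (le_lambert_of_barrier_upper rho0); [lra | lra | exact Hw | exact Hwe |].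
    apply (barrier_upper_lt rho0 rho); [lra | exact Hcont0 | exact Hode | exact Hb].
Qed.
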